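(* Let $\mathcal{N}$ be a cactus network, let $t$ be a sink of $\mathcal{N}$ with parents $p_l$ and $p_r$, and let $s$ be the lowest common ancestor of $\{p_l,p_r\}$. Let $P_l$ and $P_r$ be directed paths from $s$ to $p_l$ and from $s$ to $p_r$, respectively. Then (i) $P_l$ and $P_r$ are edge-disjoint; (ii) neither $P_l$ nor $P_r$ contains a sink, except possibly the vertex $s$; (iii) $P_l$ and $P_r$ are the unique directed paths from $s$ to $p_l$ and from $s$ to $p_r$.
   Context: A cactus network is a finite directed acyclic graph $\mathcal{N}$ with a unique vertex of indegree $0$ (the root) such that in its underlying undirected graph $\mathcal{N}^\star$ every edge belongs to at most one simple cycle. $u\succcurlyeq v$ means there is a directed path (possibly of length $0$) from $u$ to $v$; $u\succ v$ means $u\succcurlyeq v$, $u\neq v$. A lowest common ancestor of a set $V$ is a vertex $u$ with $u\succcurlyeq v$ for all $v\in V$ such that no $u'$ with $u\succ u'$ satisfies $u'\succcurlyeq v$ for all $v\in V$; in a cactus network it is unique. A sink is a vertex of indegree $2$ (every vertex of a cactus network has indegree at most $2$). *)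

From mathcomp Require Import all_boot.
Set Implicit Arguments. Unset Strict Implicit. Unset Printing Implicit Defensive.

Section CactusDefs.
Variables (V : finType) (E : rel V).

Definition indeg (v : V) : nat := #|[pred u | E u v]|.

Definition reach (u v : V) : bool := connect E u v.
Definition sreach (u v : V) : bool := reach u v && (u != v).

Definition dag : Prop := forall x y, E x y -> ~~ connect E y x.

Definition uadj (x y : V) : bool := E x y || E y x.

Definition usimple_cycle (c : seq V) : bool :=
  [&& uniq c, 2 < size c & cycle uadj c].

Definition cycle_has_edge (c : seq V) (x y : V) : bool :=
  ((x \in c) && (next c x == y)) || ((y \in c) && (next c y == x)).

(* every edge of the underlying undirected graph lies on at most one simple
   cycle (cycles being identified with their edge sets) *)
Definition cactus_property : Prop :=
  forall c1 c2 : seq V, usimple_cycle c1 -> usimple_cycle c2 ->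
  forall x y, E x y -> cycle_has_edge c1 x y -> cycle_has_edge c2 x y ->
  forall u w, E u w -> cycle_has_edge c1 u w = cycle_has_edge c2 u w.

Definition unique_root : Prop :=
  exists r : V, indeg r = 0 /\ forall v, indeg v = 0 -> v = r.

Definition cactus_network : Prop := [/\ dag, unique_root & cactus_property].

Definition is_sink (v : V) : bool := indeg v == 2.

Definition is_lca2 (s x y : V) : Prop :=
  reach s x /\ reach s y /\
  forall u, sreach s u -> ~ (reach u x /\ reach u y).

Definition path_edges (s : V) (p : seq V) : seq (V * V) := zip (s :: p) p.

End CactusDefs.

From mathcomp Require Import all_boot.
Set Implicit Arguments. Unset Strict Implicit. Unset Printing Implicit Defensive.

(* The paths [Pl], [Pr] closed up by the edges [pl -> t <- pr] form an undirected
   simple cycle C0; its vertices are distinct because [s] is the lowest common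
   ancestor.  Suppose an edge [(a, v)] of [Pl] is the last edge of one directed
   path ending at [v] while another such path ends with a different edge; this is
   what a sink on [Pl] (paths from the root through both parents of [v]) or a second
   path from [s] to [pl] produces.  Cutting both paths at their last common vertex
   gives a simple cycle through [(a, v)] made of ancestors of [pl].  By the cactus
   property it has the same edges as C0, hence contains [pl -> t]; but [t] is not an
   ancestor of [pl].  Edge-disjointness is simpler: the head of a common edge would
   be an ancestor of both parents strictly below [s]. *)

Lemma next_uniq_cat (T : eqType) (l r : seq T) a b :
  uniq (l ++ a :: b :: r) -> next (l ++ a :: b :: r) a = b.
Proof.
case: l => [|y l]; first by rewrite /= eqxx.
rewrite cat_uniq => /and3P [_ Hal _].
have aNl : a \notin y :: l by apply: contra Hal => Ha; apply/hasP; exists a; rewrite ?mem_head.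
rewrite next_nth mem_cat mem_head orbT index_cat (negbTE aNl) /= eqxx addn0.
by rewrite nth_cat ltnNge leqnSn subSnn.
Qed.

Section PathEdges.
Variables (V : finType) (E : rel V).

Lemma path_edges_cons (x y : V) p :
  path_edges x (y :: p) = (x, y) :: path_edges y p.
Proof. by []. Qed.

Lemma path_edges_cat (x : V) p q :
  path_edges x (p ++ q) = path_edges x p ++ path_edges (last x p) q.
Proof. by elim: p x => [|y p IH] x //=; rewrite !path_edges_cons IH. Qed.

Lemma path_edges_rcons_last (x y : V) p : (last x p, y) \in path_edges x (rcons p y).
Proof. by rewrite -cats1 path_edges_cat mem_cat mem_head orbT. Qed.

Lemma path_edges_split (x a b : V) p :
  (a, b) \in path_edges x p -> exists l r, x :: p = l ++ a :: b :: r.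
Proof.
elim: p x => [|y p IH] x //; rewrite path_edges_cons inE.
case/orP => [/eqP [-> ->] | /IH [l [r ->]]]; first by exists [::], p.
by exists (x :: l), r.
Qed.

Lemma path_edges_rel (x a b : V) p : path E x p -> (a, b) \in path_edges x p -> E a b.
Proof.
elim: p x => [|y p IH] x //= /andP [Exy Hp]; rewrite path_edges_cons inE.
by case/orP => [/eqP [-> ->] | /(IH _ Hp)].
Qed.

Lemma path_edges_target (x a b : V) p : (a, b) \in path_edges x p -> b \in p.
Proof.
elim: p x => [|y p IH] x //; rewrite path_edges_cons !inE.
by case/orP => [/eqP [_ ->] | /IH ->]; rewrite ?eqxx ?orbT.
Qed.

Lemma path_edges_rcons (x y : V) p :
  {subset path_edges x p <= path_edges x (rcons p y)}.
Proof. by move=> e He; rewrite -cats1 path_edges_cat mem_cat He. Qed.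

Lemma path_edges_cycle_has_edge (x a b : V) p q : uniq (x :: p ++ q) ->
  (a, b) \in path_edges x p -> cycle_has_edge (x :: p ++ q) a b.
Proof.
move=> U /path_edges_split [l [r Hxp]].
have Hc : x :: p ++ q = l ++ a :: b :: r ++ q by rewrite -cat_cons Hxp -catA.
rewrite Hc in U *.
by rewrite /cycle_has_edge next_uniq_cat // mem_cat mem_head orbT eqxx.
Qed.

Lemma cycle_has_edge_memr (c : seq V) a b : cycle_has_edge c a b -> b \in c.
Proof. by case/orP => /andP [Hc /eqP Hn] //; rewrite -Hn mem_next. Qed.

Lemma path_cons_suffix (x w : V) p l r :
  path E x p -> x :: p = l ++ w :: r -> path E w r.
Proof.
case: l => [|y l] /= Hp [Hx Hpe]; first by rewrite -Hx -Hpe.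
by move: Hp; rewrite Hpe cat_path /= => /and3P [].
Qed.

Lemma path_connect_last (x u : V) p :
  path E x p -> u \in x :: p -> connect E u (last x p).
Proof.
move=> Hp; rewrite inE => /orP [/eqP -> | Hu].
  exact: (path_connect Hp (mem_last x p)).
move: Hp; case/splitPr: Hu => l r; rewrite cat_path last_cat /= => /and3P [_ _ Hr].
exact: (path_connect Hr (mem_last u r)).
Qed.

End PathEdges.

Lemma indeg_gt1_parent (V : finType) (E : rel V) (a v : V) :
  1 < indeg E v -> exists2 b, E b v & b != a.
Proof.
move=> Hv; have : ~~ ([pred u | E u v] \subset pred1 a).
  by apply: contraTN Hv => /subset_leq_card; rewrite card1 -leqNgt.
by case/subsetPn => b; rewrite !inE => Ebv Hba; exists b.
Qed.

Section Dag.
Variables (V : finType) (E : rel V).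
Hypothesis D : dag E.

Lemma dag_edge_neq x y : E x y -> x != y.
Proof. by move=> Exy; apply: contraTneq (D Exy) => ->; rewrite connect0. Qed.

Lemma dag_path_notin x p : path E x p -> x \notin p.
Proof.
case: p => [|y p] //= /andP [Exy Hp]; apply/negP => Hx.
by have := D Exy; rewrite (path_connect Hp Hx).
Qed.

Lemma dag_path_uniq x p : path E x p -> uniq (x :: p).
Proof.
elim: p x => [|y p IH] x // Hp.
by rewrite cons_uniq (dag_path_notin Hp) IH //; case/andP: Hp.
Qed.

Lemma dag_path_loop x p : path E x p -> last x p = x -> p = [::].
Proof.
case: p => [|y p] // Hp Hl; have := dag_path_notin Hp.
by rewrite -{1}Hl /= mem_last.
Qed.

Lemma dag_source_connect r :
  (forall v, indeg E v = 0 -> v = r) -> forall v, connect E r v.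
Proof.
move=> Hr v; have [m Hm] := ubnP #|[pred u | connect E u v]|.
elim: m v Hm => // m IH v Hm.
case Hv: (indeg E v) => [|k]; first by rewrite (Hr _ Hv) connect0.
have /card_gt0P [u] : 0 < indeg E v by rewrite Hv.
rewrite inE => Euv; apply: (connect_trans (IH u _)); last exact: connect1.
rewrite -ltnS; apply: leq_trans Hm; rewrite ltnS; apply: proper_card.
apply/properP; split; last by exists v; rewrite !inE ?connect0 ?D.
apply/subsetP => w; rewrite !inE => Hw.
exact: connect_trans Hw (connect1 Euv).
Qed.

Lemma uadj_sym : symmetric (uadj E).
Proof. by move=> a b; rewrite /uadj orbC. Qed.

Lemma two_paths_simple_cycle x y A B :
  path E x (rcons A y) -> path E x (rcons B y) -> last x A != last x B ->
  uniq (x :: A ++ y :: B) ->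
  [/\ usimple_cycle E (x :: A ++ y :: rev B),
      forall a b, (a, b) \in path_edges x (rcons A y) ->
        cycle_has_edge (x :: A ++ y :: rev B) a b
    & forall u, u \in x :: A ++ y :: rev B -> connect E u y].
Proof.
move=> HA HB Hne U.
have Hc : x :: A ++ y :: rev B = x :: rcons A y ++ rev B by rewrite cat_rcons.
have Uc : uniq (x :: A ++ y :: rev B).
  rewrite (perm_uniq (_ : perm_eq _ (x :: A ++ y :: B))) //.
  by rewrite perm_cons perm_cat2l perm_cons perm_rev.
have EAy : E (last x A) y by move: HA; rewrite rcons_path => /andP [].
have EBy : E (last x B) y by move: HB; rewrite rcons_path => /andP [].
split; last 2 first.
- by move=> a b Hab; rewrite Hc; apply: path_edges_cycle_has_edge Hab; rewrite -Hc.
- move=> u; rewrite Hc -cat_cons mem_cat mem_rev => /orP [Hu | Hu].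
    by rewrite -(last_rcons x A y); apply: path_connect_last HA _.
  rewrite -(last_rcons x B y); apply: path_connect_last HB _.
  by rewrite inE mem_rcons inE Hu !orbT.
rewrite /usimple_cycle Uc andTb; apply/andP; split.
  have U3 : uniq [:: last x A; y; last x B].
    by rewrite /= !inE negb_or Hne (dag_edge_neq EAy) eq_sym (dag_edge_neq EBy).
  have HB_c : {subset x :: B <= x :: A ++ y :: rev B}.
    by move=> u; rewrite !(inE, mem_cat, mem_rev) => /orP [] ->; rewrite ?orbT.
  have HA_c : {subset x :: A <= x :: A ++ y :: rev B}.
    by move=> u; rewrite !(inE, mem_cat) => /orP [] ->; rewrite ?orbT.
  suff Hs : {subset [:: last x A; y; last x B] <= x :: A ++ y :: rev B}.
    exact: uniq_leq_size U3 Hs.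
  apply/allP; rewrite /= (HA_c _ (mem_last x A)) (HB_c _ (mem_last x B)).
  by rewrite -cat_cons mem_cat mem_head orbT.
rewrite /cycle rcons_cat rcons_cons -cat_rcons -rev_cons cat_path.
apply/andP; split; first by apply: sub_path HA => a b Eab; rewrite /uadj Eab.
have := rev_path (uadj E) x (rcons B y); rewrite !last_rcons belast_rcons => ->.
rewrite (eq_path (e' := uadj E)) => [|a b]; last exact: uadj_sym.
by apply: sub_path HB => a b Eab; rewrite /uadj Eab.
Qed.

Lemma reconverging_paths_cycle z v X Y :
  path E z (rcons X v) -> path E z (rcons Y v) -> last z X != last z Y ->
  exists c, [/\ usimple_cycle E c, cycle_has_edge c (last z X) v
              & forall u, u \in c -> connect E u v].
Proof.
move=> HX HY Hne.
(* [w] is the last vertex of [z :: Y] on [z :: X], so the tails from [w] meet only at [v]. *)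
have Hz : has [in z :: X] (rev (z :: Y)).
  by apply/hasP; exists z; [rewrite mem_rev | ]; apply: mem_head.
have : z :: Y = rev (rev (z :: Y)) by rewrite revK.
case: (split_find Hz) => w R L Hw HR; rewrite rev_cat rev_rcons => HYs.
have [X1 [X2 HXs]] : exists X1 X2, z :: X = X1 ++ w :: X2.
  by case/splitPr: Hw => X1 X2; exists X1, X2.
set Y2 := rev R.
have HYv : z :: rcons Y v = rev L ++ w :: rcons Y2 v by rewrite -rcons_cons HYs rcons_cat.
have HXv : z :: rcons X v = X1 ++ w :: rcons X2 v by rewrite -rcons_cons HXs rcons_cat.
have PX2 := path_cons_suffix HX HXv; have PY2 := path_cons_suffix HY HYv.
have LX : last z X = last w X2 by rewrite -[LHS]/(last z (z :: X)) HXs last_cat.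
have LY : last z Y = last w Y2 by rewrite -[LHS]/(last z (z :: Y)) HYs last_cat.
have /andP [vNX2 UX2] : (v \notin w :: X2) && uniq (w :: X2).
  by rewrite -rcons_uniq rcons_cons (dag_path_uniq PX2).
have UvY2 : uniq (v :: Y2) by rewrite cons_uniq -rcons_uniq; case/andP: (dag_path_uniq PY2).
have Y2NX2 : ~~ has [in w :: X2] Y2.
  apply: contra HR => /hasP [u Hu HuX]; apply/hasP; exists u; first by rewrite -mem_rev.
  by rewrite /= HXs mem_cat HuX orbT.
have U : uniq (w :: X2 ++ v :: Y2).
  by rewrite -cat_cons cat_uniq UX2 /= negb_or vNX2 Y2NX2 -cons_uniq UvY2.
have Hne' : last w X2 != last w Y2 by rewrite -LX -LY.
have [Hc Hedge Hreach] := two_paths_simple_cycle PX2 PY2 Hne' U.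
exists (w :: X2 ++ v :: rev Y2); split => //.
by rewrite LX; apply: Hedge; apply: path_edges_rcons_last.
Qed.

Lemma distinct_paths_reconverge x P Q :
  path E x P -> path E x Q -> last x P = last x Q -> P != Q ->
  exists X Y v, [/\ path E x (rcons X v), path E x (rcons Y v),
                    last x X != last x Y & (last x X, v) \in path_edges x P].
Proof.
elim/last_ind: P Q => [|P v IH] Q HP HQ Hl HPQ.
  by rewrite (dag_path_loop HQ (esym Hl)) in HPQ.
case/lastP: Q HQ Hl HPQ => [|Q w] HQ Hl HPQ.
  by have := dag_path_loop HP Hl; case: (P).
rewrite !last_rcons in Hl; rewrite -{w}Hl in HQ HPQ *.
have [Hlast | Hne] := eqVneq (last x P) (last x Q); last first.
  by exists P, Q, v; split=> //; apply: path_edges_rcons_last.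
have HP' : path E x P by move: HP; rewrite rcons_path => /andP [].
have HQ' : path E x Q by move: HQ; rewrite rcons_path => /andP [].
have HPQ' : P != Q by apply: contraNneq HPQ => ->.
have [X [Y [u [HX HY Hne HXu]]]] := IH Q HP' HQ' Hlast HPQ'.
by exists X, Y, u; split=> //; apply: path_edges_rcons.
Qed.

End Dag.

Lemma is_lca2_sym (V : finType) (E : rel V) s x y : is_lca2 E s x y -> is_lca2 E s y x.
Proof. by case=> Hx [Hy Hlca]; split=> //; split=> // u /Hlca Hu [Huy Hux]; apply: Hu. Qed.

Lemma lca_paths_edge_disjoint (V : finType) (E : rel V) s x y P Q :
  dag E -> is_lca2 E s x y ->
  path E s P -> last s P = x -> path E s Q -> last s Q = y ->
  forall e, e \in path_edges s P -> e \notin path_edges s Q.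
Proof.
move=> D [_ [_ Hlca]] HP HlP HQ HlQ [a b] HabP; apply/negP => HabQ.
have HbP := path_edges_target HabP; have HbQ := path_edges_target HabQ.
apply: (Hlca b); last split.
- rewrite /sreach /reach (path_connect HP) ?inE ?HbP ?orbT //=.
  by apply: contraNneq (dag_path_notin D HP) => ->.
- by rewrite /reach -HlP; apply: path_connect_last HP _; rewrite inE HbP orbT.
- by rewrite /reach -HlQ; apply: path_connect_last HQ _; rewrite inE HbQ orbT.
Qed.

Section SinkParents.
Variables (V : finType) (E : rel V) (t pl pr s : V) (Pl Pr : seq V).
Hypotheses (D : dag E) (C : cactus_property E).
Hypotheses (Hplt : E pl t) (Hprt : E pr t) (Hplr : pl != pr) (Hlca : is_lca2 E s pl pr).
Hypotheses (HPl : path E s Pl) (HlPl : last s Pl = pl).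
Hypotheses (HPr : path E s Pr) (HlPr : last s Pr = pr).

Lemma lca_paths_uniq : uniq (s :: Pl ++ t :: Pr).
Proof.
have [_ [_ Hlca']] := Hlca.
have to_pl u : u \in s :: Pl -> connect E u pl by rewrite -HlPl; apply: path_connect_last.
have to_pr u : u \in s :: Pr -> connect E u pr by rewrite -HlPr; apply: path_connect_last.
rewrite -cat_cons cat_uniq (dag_path_uniq D HPl) /=; apply/and3P; split.
- rewrite negb_or; apply/andP; split.
    by apply/negP => /to_pl Htpl; have := D Hplt; rewrite Htpl.
  apply/hasPn => u Hu; apply/negP => HuPl.
  have Hus : u != s by apply: contraNneq (dag_path_notin D HPr) => <-.
  move: HuPl; rewrite inE (negbTE Hus) /= => HuPl.
  apply: (Hlca' u); last by split; [apply: to_pl | apply: to_pr]; rewrite inE ?HuPl ?Hu orbT.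
  by rewrite /sreach /reach eq_sym Hus (path_connect HPl) ?inE ?HuPl ?orbT.
- apply/negP => HtPr; have := D Hprt.
  by rewrite to_pr // inE HtPr orbT.
- by case/andP: (dag_path_uniq D HPr).
Qed.

Lemma lca_path_edge_reconvergeF z X Y v :
  path E z (rcons X v) -> path E z (rcons Y v) -> last z X != last z Y ->
  (last z X, v) \notin path_edges s Pl.
Proof.
move=> HX HY Hne; apply/negP => Hav.
have [c [Hc Hcav Hcv]] := reconverging_paths_cycle D HX HY Hne.
have Hvpl : connect E v pl.
  by rewrite -HlPl; apply: path_connect_last HPl _; rewrite inE (path_edges_target Hav) orbT.
have tNc : t \notin c.
  by apply/negP => /Hcv Htv; have := D Hplt; rewrite (connect_trans Htv Hvpl).
have HPlt : path E s (rcons Pl t) by rewrite rcons_path HPl HlPl.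
have HPrt : path E s (rcons Pr t) by rewrite rcons_path HPr HlPr.
have Hne' : last s Pl != last s Pr by rewrite HlPl HlPr.
have [Hc0 Hc0E _] := two_paths_simple_cycle D HPlt HPrt Hne' lca_paths_uniq.
have := C Hc0 Hc (path_edges_rel HPl Hav) (Hc0E _ _ (path_edges_rcons _ Hav)) Hcav Hplt.
rewrite Hc0E; last by rewrite -HlPl path_edges_rcons_last.
by move/esym/cycle_has_edge_memr; rewrite (negbTE tNc).
Qed.

Variable r : V.
Hypothesis Hroot : forall v, indeg E v = 0 -> v = r.

Lemma lca_path_sink_free v : v \in Pl -> ~~ is_sink E v.
Proof.
move=> Hv; apply/negP => /eqP Hv2.
have [l [l' HPls]] : exists l l', Pl = l ++ v :: l'.
  by case/splitPr: Hv => l l'; exists l, l'.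
have Hav : (last s l, v) \in path_edges s Pl.
  by rewrite HPls path_edges_cat mem_cat path_edges_cons mem_head orbT.
have [b Ebv Hba] : exists2 b, E b v & b != last s l.
  by apply: indeg_gt1_parent; rewrite Hv2.
have [ps Hps Hlps] := connectP (dag_source_connect D Hroot s).
have [pb Hpb Hlpb] := connectP (dag_source_connect D Hroot b).
have HX : path E r (rcons (ps ++ l) v).
  move: HPl; rewrite HPls cat_path => /andP [Hl /= /andP [Ev _]].
  by rewrite rcons_cat cat_path Hps -Hlps rcons_path Hl Ev.
have HY : path E r (rcons pb v) by rewrite rcons_path Hpb -Hlpb.
have Hne : last r (ps ++ l) != last r pb by rewrite last_cat -Hlps -Hlpb eq_sym.
by have := lca_path_edge_reconvergeF HX HY Hne; rewrite last_cat -Hlps Hav.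
Qed.

Lemma lca_path_unique Q : path E s Q -> last s Q = pl -> Q = Pl.
Proof.
move=> HQ HlQ; apply/eqP; rewrite eq_sym; apply: contraT => HPlQ.
have [X [Y [v [HX HY Hne Hedge]]]] :=
  distinct_paths_reconverge D HPl HQ (etrans HlPl (esym HlQ)) HPlQ.
by rewrite (negbTE (lca_path_edge_reconvergeF HX HY Hne)) in Hedge.
Qed.

End SinkParents.

Theorem lemma5 (V : finType) (E : rel V) (t pl pr s : V) (Pl Pr : seq V) :
  cactus_network E ->
  is_sink E t -> E pl t -> E pr t -> pl != pr ->
  is_lca2 E s pl pr ->
  path E s Pl -> last s Pl = pl ->
  path E s Pr -> last s Pr = pr ->
  [/\ (* (i) edge-disjoint *)
      (forall e, e \in path_edges s Pl -> e \notin path_edges s Pr),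
      (* (ii) no sink on the paths except possibly s *)
      (forall v, v \in Pl -> ~~ is_sink E v) /\
      (forall v, v \in Pr -> ~~ is_sink E v) &
      (* (iii) uniqueness *)
      (forall Q, path E s Q -> last s Q = pl -> Q = Pl) /\
      (forall Q, path E s Q -> last s Q = pr -> Q = Pr)].
Proof.
move=> [D [r [_ Hroot]] C] _ Hplt Hprt Hplr Hlca HPl HlPl HPr HlPr.
have Hlca' := is_lca2_sym Hlca.
have Hprl : pr != pl by rewrite eq_sym.
split; first exact: lca_paths_edge_disjoint D Hlca HPl HlPl HPr HlPr.
- split.
  + exact: (lca_path_sink_free D C Hplt Hprt Hplr Hlca HPl HlPl HPr HlPr Hroot).
  + exact: (lca_path_sink_free D C Hprt Hplt Hprl Hlca' HPr HlPr HPl HlPl Hroot).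
- split.
  + exact: (lca_path_unique D C Hplt Hprt Hplr Hlca HPl HlPl HPr HlPr).
  + exact: (lca_path_unique D C Hprt Hplt Hprl Hlca' HPr HlPr HPl HlPl).
Qed.
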